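(* Fix $\beta\in(1,2)$, let $Y$ be the stationary random walk described in the context, and let $\mathcal C=\{2,4,6,\dots\}$ be the set of even positive integers. Then $\mathbf P[Y_0\in\mathcal C]=1/4$ and, as $t\to\infty$, $$\mathbf P[Y_t\in\mathcal C\mid Y_0\in\mathcal C]=\tfrac14+t^{\frac{1-\beta}{2}+o(1)},$$ while $\mathbf P[Y_s\in\mathcal C\ \forall s\in\{0,\dots,t\}]$ decays exponentially in $t$.
   Context: The graph has vertex set $\mathbb Z^*=\mathbb Z\setminus\{0\}$ and edges: nearest-neighbour edges $\{n,n+1\}$ and $\{-(n+1),-n\}$ for $n\ge1$, the edge $\{-1,1\}$, and a self-loop at every vertex. Conductances: $c_{n,n+1}=c_{-(n+1),-n}=n^{-\beta}$ for $n\ge1$; $c_{-1,1}=c_{1,1}=c_{-1,-1}=1/2$; and for $|n|\ge2$ the self-loop conductance is $c_{n,n}=c_{n,n-1}+c_{n,n+1}$. The discrete-time walk moves from $x$ to $y$ with probability $c_{x,y}/\pi(x)$, where $\pi(x)=\sum_y c_{x,y}$ (self-loop counted once); it is run in stationarity (started from normalized $\pi$), with law $\mathbf P$. (With these conductances, $\mathbf P[Y_{t+1}\in 2\mathbb Z\mid Y_t]=1/2$ regardless of $Y_t$.) *)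

From Stdlib Require Import Reals ZArith.
Open Scope R_scope.

(* The vertex set is Z* = Z \ {0}, represented by integers x <> 0.
   Neighbours along the "line" Z*: up x is the successor (skipping 0),
   down x the predecessor. *)
Definition up (x : Z) : Z := if Z.eqb x (-1) then 1%Z else (x + 1)%Z.
Definition down (x : Z) : Z := if Z.eqb x 1 then (-1)%Z else (x - 1)%Z.

(* conductance of the edge {x, up x}:
   x >= 1      : edge {n,n+1}, n = x,        c = n^{-beta}
   x = -1      : edge {-1,1},                c = 1/2
   x <= -2     : edge {-(n+1),-n}, n = -x-1, c = n^{-beta} *)
Definition cedge (beta : R) (x : Z) : R :=
  if Z.leb 1 x then Rpower (IZR x) (- beta)
  else if Z.eqb x (-1) then / 2
  else if Z.leb x (-2) then Rpower (IZR (- x - 1)) (- beta)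
  else 0.

Definition cself (beta : R) (x : Z) : R :=
  if orb (Z.eqb x 1) (Z.eqb x (-1)) then / 2
  else if Z.eqb x 0 then 0
  else cedge beta (down x) + cedge beta x.

(* pi(x) = sum_y c_{x,y} (self-loop counted once); pi 0 = 0 (0 is not a vertex) *)
Definition pi (beta : R) (x : Z) : R :=
  if Z.eqb x 0 then 0
  else cedge beta (down x) + cedge beta x + cself beta x.

Definition pdown (beta : R) (x : Z) : R := cedge beta (down x) / pi beta x.
Definition pstay (beta : R) (x : Z) : R := cself beta x / pi beta x.
Definition pup (beta : R) (x : Z) : R := cedge beta x / pi beta x.

Definition indC (x : Z) : R := if andb (Z.ltb 0 x) (Z.even x) then 1 else 0.

Fixpoint hitC (beta : R) (t : nat) (x : Z) : R :=
  match t with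
  | O => indC x
  | S t' => pdown beta x * hitC beta t' (down x)
            + pstay beta x * hitC beta t' x
            + pup beta x * hitC beta t' (up x)
  end.

Fixpoint stayC (beta : R) (t : nat) (x : Z) : R :=
  match t with
  | O => indC x
  | S t' => indC x * (pdown beta x * stayC beta t' (down x)
                      + pstay beta x * stayC beta t' x
                      + pup beta x * stayC beta t' (up x))
  end.

Definition sumZstar (f : Z -> R) (l : R) : Prop :=
  infinite_sum (fun n => f (Z.of_nat (S n)) + f (- Z.of_nat (S n))%Z) l.

Definition sumC (f : Z -> R) (l : R) : Prop :=
  infinite_sum (fun n => f (2 * Z.of_nat (S n))%Z) l.

From Pilot Require Import Defs.
From Stdlib Require Import Reals ZArith.
Open Scope R_scope.

From Stdlib Require Import Lra Lia Psatz.
From Coquelicot Require Import Coquelicot.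

(* P[Y_0 in C] = 1/4 because, away from the origin, pi(x) = 2 (c(x-1,x) + c(x,x+1)), so
   that pi(C) = 2 zeta(beta) and pi(Z* ) = 8 zeta(beta) ([stationary_masses]).  Away from +-1 the walk stays put with probability 1/2
   and never moves between two even sites, so P[Y_s in C for s <= t] = 2^{-t} / 4
   ([stayC_geometric]).  By the reflection x -> -x, P_x[Y_{t+1} in C] = 1/4 +- u_t(|x|)/4,
   where u is the survival probability of a walk on {1,2,...} with drift ~ 1/x towards 1,
   killed with probability 1/2 at each visit to 1 ([hitC_odd_part]).  Hence
   P[Y_t in C | Y_0 in C] - 1/4 = corr (t-1) / (4 pi(C)),  corr s = sum_{x in C} pi(x) u_s(x).

   Summing against pi(x) ~ x^{-beta} gives
   s^{(1-beta)/2} <~ corr s <~ s^{(1-beta)/2} (log s)^{beta-1} ([corr_lower],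
   [corr_upper_eventually]), and such bounds force ln(excess) / ln t -> (1-beta)/2
   ([log_ratio_limit]). *)

Lemma Rpower_pos a e : 0 < Rpower a e.
Proof. apply exp_pos. Qed.

Lemma exp_le x y : x <= y -> exp x <= exp y.
Proof. intros [H | ->]; [left; apply exp_increasing | right]; auto. Qed.

Lemma Rpower_le_neg a b e : 0 < a -> a <= b -> e <= 0 -> Rpower b e <= Rpower a e.
Proof.
  intros Ha Hab He. apply exp_le.
  assert (ln a <= ln b) by (apply ln_le; lra). nra.
Qed.

Lemma Rpower_1_base e : Rpower 1 e = 1.
Proof. unfold Rpower; rewrite ln_1, Rmult_0_r, exp_0; auto. Qed.

Lemma Rpower_inv_base a e : 0 < a -> Rpower (/ a) e = Rpower a (- e).
Proof. intro Ha. unfold Rpower. rewrite ln_Rinv by lra. f_equal. ring. Qed.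

Lemma ln_le_xm1 x : 0 < x -> ln x <= x - 1.
Proof. intro H. pose proof (exp_ineq1_le (ln x)) as He. rewrite exp_ln in He by auto. lra. Qed.

Lemma ln_le_2sqrt z : 0 < z -> ln z <= 2 * sqrt z.
Proof.
  intro H. pose proof (sqrt_lt_R0 z H) as Hs.
  rewrite <- (sqrt_sqrt z) at 1 by lra. rewrite ln_mult by lra.
  pose proof (ln_le_xm1 (sqrt z) Hs). lra.
Qed.

Lemma nat_sqrt_bounds s : INR (Nat.sqrt s) <= sqrt (INR s) < INR (Nat.sqrt s) + 1.
Proof.
  destruct (Nat.sqrt_spec s ltac:(lia)) as [H1 H2].
  apply le_INR in H1. apply lt_INR in H2. rewrite mult_INR in H1. rewrite mult_INR, S_INR in H2.
  pose proof (pos_INR (Nat.sqrt s)). split.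
  - rewrite <- (sqrt_square (INR (Nat.sqrt s))) by lra. apply sqrt_le_1_alt. exact H1.
  - rewrite <- (sqrt_square (INR (Nat.sqrt s) + 1)) by lra.
    apply sqrt_lt_1_alt. split; [apply pos_INR | exact H2].
Qed.

(* Discrete convexity bound behind the tail sums of [n^{-beta}]:
   [(beta-1) y^{-beta} <= (y-1)^{1-beta} - y^{1-beta}]. *)
Lemma power_telescope beta y : 1 < beta -> 2 <= y ->
  (beta - 1) * Rpower y (- beta) <= Rpower (y - 1) (- (beta - 1)) - Rpower y (- (beta - 1)).
Proof.
  intros Hb Hy. set (al := beta - 1).
  assert (E1 : Rpower (y - 1) (- al) = Rpower y (- al) * exp (al * (ln y - ln (y - 1)))).
  { unfold Rpower. rewrite <- exp_plus. f_equal. ring. }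
  assert (E2 : Rpower y (- beta) = Rpower y (- al) * / y).
  { unfold al. replace (- beta) with (- (beta - 1) + - (1)) by ring.
    rewrite Rpower_plus, (Rpower_Ropp y 1), Rpower_1 by lra. auto. }
  assert (Hlog : / y <= ln y - ln (y - 1)).
  { assert (H : ln ((y - 1) / y) <= (y - 1) / y - 1)
      by (apply ln_le_xm1; apply Rdiv_lt_0_compat; lra).
    unfold Rdiv in H. rewrite ln_mult, ln_Rinv in H by (try apply Rinv_0_lt_compat; lra).
    replace ((y - 1) * / y - 1) with (- / y) in H by (field; lra). lra. }
  pose proof (exp_ineq1_le (al * (ln y - ln (y - 1)))).
  rewrite E1, E2. pose proof (Rpower_pos y (- al)).
  assert (al * / y <= al * (ln y - ln (y - 1))) by (apply Rmult_le_compat_l; unfold al; lra).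
  nra.
Qed.

Lemma Rdiv_le_cross a b c d : 0 < b -> 0 < d -> a * d <= c * b -> a / b <= c / d.
Proof.
  intros Hb Hd H. apply Rmult_le_reg_r with (b * d); [nra|].
  replace (a / b * (b * d)) with (a * d) by (field; lra).
  replace (c / d * (b * d)) with (c * b) by (field; lra). exact H.
Qed.

Section DriftedWalk.

(* A lazy nearest-neighbour walk on {2,3,...}: from x it stays with probability 1/2
   and moves to x-1, x+1 with probabilities pd x, pu x; the drift towards 1 is of
   order 1/x. *)
Variables pd pu : Z -> R.
Hypothesis pd_nonneg : forall x, (2 <= x)%Z -> 0 <= pd x.
Hypothesis pu_nonneg : forall x, (2 <= x)%Z -> 0 <= pu x.
Hypothesis move_half : forall x, (2 <= x)%Z -> pd x + pu x = / 2.
Hypothesis drift_lower : forall x, (2 <= x)%Z -> / (2 * (2 * IZR x - 1)) <= pd x - pu x.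
Hypothesis drift_upper : forall x, (2 <= x)%Z -> pd x - pu x <= 6 / IZR x.

Definition avg (x : Z) (f : Z -> R) : R := pd x * f (x - 1)%Z + / 2 * f x + pu x * f (x + 1)%Z.

Lemma avg_mono x f g : (2 <= x)%Z ->
  f (x - 1)%Z <= g (x - 1)%Z -> f x <= g x -> f (x + 1)%Z <= g (x + 1)%Z ->
  avg x f <= avg x g.
Proof.
  intros Hx H1 H2 H3. unfold avg.
  pose proof (Rmult_le_compat_l _ _ _ (pd_nonneg x Hx) H1).
  pose proof (Rmult_le_compat_l _ _ _ (pu_nonneg x Hx) H3). lra.
Qed.

Lemma avg_affine x f a b : (2 <= x)%Z -> avg x (fun y => a * f y + b) = a * avg x f + b.
Proof. intro Hx. unfold avg. pose proof (move_half x Hx). nra. Qed.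

Lemma avg_add_const x f c : (2 <= x)%Z -> avg x (fun y => f y + c) = avg x f + c.
Proof.
  intro Hx. rewrite <- (Rmult_1_l (avg x f)), <- (avg_affine x f 1 c Hx). unfold avg. ring.
Qed.

Lemma avg_unit x f : (2 <= x)%Z ->
  0 <= f (x - 1)%Z <= 1 -> 0 <= f x <= 1 -> 0 <= f (x + 1)%Z <= 1 -> 0 <= avg x f <= 1.
Proof.
  intros Hx H1 H2 H3. unfold avg.
  pose proof (pd_nonneg x Hx). pose proof (pu_nonneg x Hx). pose proof (move_half x Hx).
  split; nra.
Qed.

Lemma avg_sq x c : (2 <= x)%Z -> avg x (fun y => (c - IZR y) ^ 2) =
  (c - IZR x) ^ 2 + 2 * (c - IZR x) * (pd x - pu x) + / 2.
Proof. intro Hx. unfold avg. rewrite minus_IZR, plus_IZR. pose proof (move_half x Hx). nra. Qed.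

Lemma avg_id x : (2 <= x)%Z -> avg x IZR = IZR x - (pd x - pu x).
Proof. intro Hx. unfold avg. rewrite minus_IZR, plus_IZR. pose proof (move_half x Hx). nra. Qed.

(* Survival probability of the walk which, at 1, moves to 2 with probability 1/2 and
   is killed otherwise.  It is the odd part of P_x[Y_t in C] for the walk on Z*. *)
Fixpoint surv (t : nat) (x : Z) : R :=
  match t with
  | O => 1
  | S t' => if Z.eqb x 1 then / 2 * surv t' 2 else avg x (surv t')
  end.

Lemma surv_S_ge2 t x : (2 <= x)%Z -> surv (S t) x = avg x (surv t).
Proof. intro Hx. simpl. rewrite (proj2 (Z.eqb_neq x 1)) by lia. reflexivity. Qed.

Lemma surv_S_one t : surv (S t) 1 = / 2 * surv t 2.
Proof. reflexivity. Qed.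

Lemma surv_unit t x : (1 <= x)%Z -> 0 <= surv t x <= 1.
Proof.
  revert x. induction t as [|t IH]; intros x Hx; [simpl; lra|].
  destruct (Z.eq_dec x 1) as [-> | Hx1].
  - rewrite surv_S_one. pose proof (IH 2%Z ltac:(lia)). lra.
  - rewrite surv_S_ge2 by lia. apply avg_unit; try lia; apply IH; lia.
Qed.

Lemma surv_step_le t x : (1 <= x)%Z -> surv (S t) x <= surv t x.
Proof.
  revert x. induction t as [|t IH]; intros x Hx.
  - pose proof (surv_unit 1 x Hx). simpl surv at 2. lra.
  - destruct (Z.eq_dec x 1) as [-> | Hx1].
    + rewrite !surv_S_one. pose proof (IH 2%Z ltac:(lia)). lra.
    + rewrite !surv_S_ge2 by lia. apply avg_mono; try lia; apply IH; lia.
Qed.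

Lemma surv_antitone m k x : (m <= k)%nat -> (1 <= x)%Z -> surv k x <= surv m x.
Proof.
  intros Hk Hx. induction Hk; [lra|].
  pose proof (surv_step_le m0 x Hx). lra.
Qed.

(* Lower bound on survival (a supermartingale estimate for (x0 - X_t)^2 + 25 t, which
   only feels the drift once X_t > x0/2): the walk started near x0 needs time of order
   x0^2 to die. *)
Lemma surv_deficit x0 t y : 4 <= x0 -> (1 <= y)%Z ->
  1 - surv t y <= 4 * ((x0 - IZR y) ^ 2 + 25 * INR t) / x0 ^ 2.
Proof.
  intro Hx0. revert y. induction t as [|t IH]; intros y Hy.
  - simpl surv. simpl INR. rewrite Rminus_diag. apply Rdiv_le_0_compat; [|nra].
    pose proof (pow2_ge_0 (x0 - IZR y)). lra.
  - assert (HY : 1 <= IZR y) by (apply IZR_le; lia).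
    pose proof (surv_unit (S t) y Hy). rewrite S_INR.
    destruct (Rle_lt_dec (IZR y) (x0 / 2)) as [Hnear | Hfar].
    { apply Rle_trans with 1; [lra|]. apply Rle_div_r; [nra|].
      pose proof (pos_INR t). nra. }
    assert (Hy2 : (2 <= y)%Z) by (assert (H2 : 2 < IZR y) by lra; apply lt_IZR in H2; lia).
    set (k := 4 / x0 ^ 2). assert (Hk : 0 < k) by (unfold k; apply Rdiv_lt_0_compat; nra).
    assert (Hdrift : 2 * (x0 - IZR y) * (pd y - pu y) <= 24).
    { pose proof (drift_lower y Hy2) as Hlo. pose proof (drift_upper y Hy2) as Hup.
      assert (0 < / (2 * (2 * IZR y - 1))) by (apply Rinv_0_lt_compat; lra).
      assert ((pd y - pu y) * IZR y <= 6) by (apply Rle_div_r; [lra | exact Hup]).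
      destruct (Rle_lt_dec x0 (IZR y)); nra. }
    rewrite surv_S_ge2 by lia.
    replace (1 - avg y (surv t)) with (avg y (fun z => -1 * surv t z + 1))
      by (rewrite (avg_affine y (surv t) (-1) 1) by lia; ring).
    apply Rle_trans with (avg y (fun z => k * (x0 - IZR z) ^ 2 + k * 25 * INR t)).
    { apply avg_mono; try lia; intros;
        [pose proof (IH (y - 1)%Z ltac:(lia)) | pose proof (IH y Hy)
        | pose proof (IH (y + 1)%Z ltac:(lia))];
        unfold k, Rdiv in *; lra. }
    rewrite avg_affine, avg_sq by lia.
    replace (4 * ((x0 - IZR y) ^ 2 + 25 * (INR t + 1)) / x0 ^ 2)
      with (k * ((x0 - IZR y) ^ 2 + 25 * (INR t + 1))) by (unfold k, Rdiv; ring).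
    nra.
Qed.

Lemma surv_half x0 t y : 4 <= x0 -> 400 * INR t <= x0 ^ 2 ->
  (1 <= y)%Z -> x0 <= IZR y <= 5 / 4 * x0 -> / 2 <= surv t y.
Proof.
  intros Hx0 Ht Hy HY. pose proof (surv_deficit x0 t y Hx0 Hy).
  assert (4 * ((x0 - IZR y) ^ 2 + 25 * INR t) / x0 ^ 2 <= / 2).
  { apply Rle_div_l; nra. }
  lra.
Qed.

(* Upper bounds on survival compare with two auxiliary killed walks:
   [avoid t x] = P_x[the walk has not visited 1 by time t], and
   [inside L t x] = P_x[the walk stays in the window (1, L) up to time t]. *)
Fixpoint avoid (t : nat) (x : Z) : R :=
  match t with
  | O => if Z.eqb x 1 then 0 else 1
  | S t' => if Z.eqb x 1 then 0 else avg x (avoid t')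
  end.

Definition in_window (L x : Z) : bool := andb (Z.ltb 1 x) (Z.ltb x L).

Lemma in_window_spec L x : in_window L x = true <-> (1 < x < L)%Z.
Proof. unfold in_window. rewrite Bool.andb_true_iff, !Z.ltb_lt. tauto. Qed.

Fixpoint inside (L : Z) (t : nat) (x : Z) : R :=
  match t with
  | O => if in_window L x then 1 else 0
  | S t' => if in_window L x then avg x (inside L t') else 0
  end.

Lemma avoid_S_ge2 t x : (2 <= x)%Z -> avoid (S t) x = avg x (avoid t).
Proof. intro Hx. simpl. rewrite (proj2 (Z.eqb_neq x 1)) by lia. reflexivity. Qed.

Lemma avoid_unit t x : (1 <= x)%Z -> 0 <= avoid t x <= 1.
Proof.
  revert x. induction t as [|t IH]; intros x Hx; simpl.
  - destruct (Z.eqb x 1); lra.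
  - destruct (Z.eqb_spec x 1); [lra|]. apply avg_unit; try lia; apply IH; lia.
Qed.

Lemma inside_out L t x : in_window L x = false -> inside L t x = 0.
Proof. intro H. destruct t; simpl; rewrite H; reflexivity. Qed.

Lemma inside_S_in L t x : (1 < x < L)%Z -> inside L (S t) x = avg x (inside L t).
Proof. intro H. simpl. rewrite (proj2 (in_window_spec L x) H). reflexivity. Qed.

Lemma inside_unit L t x : (1 <= x)%Z -> 0 <= inside L t x <= 1.
Proof.
  revert x. induction t as [|t IH]; intros x Hx; simpl.
  - destruct (in_window L x); lra.
  - destruct (in_window L x) eqn:E; [|lra]. apply in_window_spec in E.
    apply avg_unit; try lia; apply IH; lia.
Qed.

Lemma inside_step_le L t x : (1 <= x)%Z -> inside L (S t) x <= inside L t x.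
Proof.
  revert x. induction t as [|t IH]; intros x Hx.
  - destruct (in_window L x) eqn:E.
    + pose proof E as E'. apply in_window_spec in E'.
      rewrite inside_S_in by lia. simpl inside at 2. rewrite E.
      apply avg_unit; try lia; apply inside_unit; lia.
    + rewrite !inside_out by auto. lra.
  - destruct (in_window L x) eqn:E.
    + apply in_window_spec in E. rewrite !inside_S_in by lia.
      apply avg_mono; try lia; apply IH; lia.
    + rewrite !inside_out by auto. lra.
Qed.

(* Killing at 1 is split at time n: either 1 is still unvisited, or the walk is
   restarted from 1 (survival is monotone in time). *)
Lemma surv_split n m x : (1 <= x)%Z -> surv (n + m) x <= avoid n x + surv m 1.
Proof.
  revert x. induction n as [|n IH]; intros x Hx.
  - simpl. pose proof (surv_unit m x Hx). pose proof (surv_unit m 1 ltac:(lia)).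
    destruct (Z.eqb_spec x 1) as [-> |]; lra.
  - destruct (Z.eq_dec x 1) as [-> | Hx1].
    + simpl avoid. pose proof (surv_antitone m (S n + m) 1 ltac:(lia) ltac:(lia)). lra.
    + replace (S n + m)%nat with (S (n + m)) by lia.
      rewrite surv_S_ge2, avoid_S_ge2, <- avg_add_const by lia.
      apply avg_mono; try lia; apply IH; lia.
Qed.

(* Before leaving the window (1, L) upwards the walk must travel a distance ~ L;
   since X_t^2 is a supermartingale, this has probability at most x^2 / L^2. *)
Lemma avoid_le_inside L n x : (2 <= L)%Z -> (1 <= x)%Z ->
  avoid n x <= IZR x ^ 2 / IZR L ^ 2 + inside L n x.
Proof.
  intros HL. assert (HL' : 2 <= IZR L) by (apply IZR_le; lia).
  assert (Hsq_nonneg : forall z, 0 <= IZR z ^ 2 / IZR L ^ 2)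
    by (intro z; apply Rdiv_le_0_compat; [apply pow2_ge_0 | nra]).
  assert (Hsq_big : forall z, (L <= z)%Z -> 1 <= IZR z ^ 2 / IZR L ^ 2).
  { intros z Hz. assert (IZR L <= IZR z) by (apply IZR_le; lia).
    apply Rle_div_r; nra. }
  revert x. induction n as [|n IH]; intros x Hx.
  - pose proof (Hsq_nonneg x). pose proof (inside_unit L 0 x Hx).
    destruct (Z.eq_dec x 1) as [-> | Hx1]; [simpl avoid; lra|].
    simpl avoid. rewrite (proj2 (Z.eqb_neq x 1) Hx1).
    destruct (Z_lt_le_dec x L) as [HxL | HxL].
    + simpl inside. rewrite (proj2 (in_window_spec L x)) by lia. lra.
    + pose proof (Hsq_big x HxL). lra.
  - pose proof (Hsq_nonneg x). pose proof (inside_unit L (S n) x Hx).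
    pose proof (avoid_unit (S n) x Hx).
    destruct (Z.eq_dec x 1) as [-> | Hx1]; [simpl avoid; lra|].
    destruct (Z_lt_le_dec x L) as [HxL | HxL].
    2: { pose proof (Hsq_big x HxL). lra. }
    rewrite avoid_S_ge2, inside_S_in by lia.
    apply Rle_trans with (avg x (fun z => IZR z ^ 2 / IZR L ^ 2 + inside L n z)).
    { apply avg_mono; try lia; apply IH; lia. }
    replace (avg x (fun z => IZR z ^ 2 / IZR L ^ 2 + inside L n z))
      with (avg x (fun z => (0 - IZR z) ^ 2) / IZR L ^ 2 + avg x (inside L n))
      by (unfold avg, Rdiv; ring).
    rewrite avg_sq by lia.
    assert (HX : 2 <= IZR x) by (apply IZR_le; lia).
    assert (Hd : / 4 <= IZR x * (pd x - pu x)).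
    { apply Rle_trans with (IZR x / (2 * (2 * IZR x - 1))).
      - apply Rle_div_r; lra.
      - apply Rmult_le_compat_l; [lra | apply drift_lower; lia]. }
    assert (0 < / IZR L ^ 2) by (apply Rinv_0_lt_compat; nra).
    unfold Rdiv. nra.
Qed.

Fixpoint green (L : Z) (n : nat) (x : Z) : R :=
  match n with O => 0 | S n' => green L n' x + inside L n' x end.

Lemma green_S L n x : green L (S n) x =
  if in_window L x then 1 + avg x (green L n) else 0.
Proof.
  revert x. induction n as [|n IH]; intro x.
  - simpl. unfold avg. destruct (in_window L x); ring.
  - change (green L (S (S n)) x) with (green L (S n) x + inside L (S n) x).
    rewrite IH. simpl inside. simpl green. unfold avg.
    destruct (in_window L x); ring.
Qed.

(* The drift towards 1 makes 4 L x a superharmonic majorant: the expected exit time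
   from (1, L) is at most 4 L x. *)
Lemma green_bound L n x : (2 <= L)%Z -> (1 <= x)%Z -> green L n x <= 4 * IZR L * IZR x.
Proof.
  intro HL. assert (HL' : 2 <= IZR L) by (apply IZR_le; lia).
  revert x. induction n as [|n IH]; intros x Hx.
  - simpl. assert (1 <= IZR x) by (apply IZR_le; lia). nra.
  - rewrite green_S. destruct (in_window L x) eqn:E.
    2: { assert (1 <= IZR x) by (apply IZR_le; lia). nra. }
    apply in_window_spec in E.
    apply Rle_trans with (1 + avg x (fun z => 4 * IZR L * IZR z + 0)).
    { apply Rplus_le_compat_l. apply avg_mono; try lia; rewrite Rplus_0_r; apply IH; lia. }
    rewrite avg_affine, avg_id by lia.
    assert (HX : 2 <= IZR x) by (apply IZR_le; lia).
    assert (HXL : IZR x + 1 <= IZR L) by (rewrite <- plus_IZR; apply IZR_le; lia).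
    assert (Hd : 1 <= 4 * IZR L * (pd x - pu x)).
    { apply Rle_trans with (4 * IZR L / (2 * (2 * IZR x - 1))).
      - apply Rle_div_r; lra.
      - apply Rmult_le_compat_l; [lra | apply drift_lower; lia]. }
    nra.
Qed.

(* Since survival in the window is monotone in time, n * inside n <= green n. *)
Lemma inside_decay L n x : (2 <= L)%Z -> (1 <= n)%nat -> (1 <= x)%Z ->
  inside L n x <= 4 * IZR L ^ 2 / INR n.
Proof.
  intros HL Hn Hx.
  assert (Hn' : 1 <= INR n) by (apply (le_INR 1); auto).
  assert (HL' : 2 <= IZR L) by (apply IZR_le; lia).
  assert (Havg : forall k, INR k * inside L k x <= green L k x).
  { induction k as [|k IHk]; [simpl; lra|].
    rewrite S_INR. simpl green.
    pose proof (inside_step_le L k x Hx). pose proof (inside_unit L (S k) x Hx).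
    pose proof (pos_INR k). nra. }
  destruct (in_window L x) eqn:E.
  - apply in_window_spec in E. apply Rle_div_r; [lra|].
    pose proof (Havg n). pose proof (green_bound L n x HL Hx).
    assert (IZR x <= IZR L) by (apply IZR_le; lia). nra.
  - rewrite inside_out by auto. apply Rdiv_le_0_compat; nra.
Qed.

(* Markov property: if survival in the window for b steps is at most th from
   everywhere, the survival probabilities are submultiplicative. *)
Lemma inside_submult L a b th x : 0 <= th ->
  (forall y, (1 <= y)%Z -> inside L b y <= th) -> (1 <= x)%Z ->
  inside L (a + b) x <= th * inside L a x.
Proof.
  intros Hth Hsup. revert x. induction a as [|a IH]; intros x Hx.
  - destruct (in_window L x) eqn:E.
    + replace (inside L 0 x) with 1 by (simpl; rewrite E; reflexivity).
      specialize (Hsup x Hx). change (0 + b)%nat with b. lra.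
    + rewrite !inside_out by auto. lra.
  - destruct (in_window L x) eqn:E.
    + apply in_window_spec in E. replace (S a + b)%nat with (S (a + b)) by lia.
      rewrite !inside_S_in by lia.
      replace (th * avg x (inside L a)) with (avg x (fun z => th * inside L a z + 0))
        by (rewrite avg_affine by lia; ring).
      apply avg_mono; try lia; rewrite Rplus_0_r; apply IH; lia.
    + rewrite !inside_out by auto. lra.
Qed.

Lemma inside_geometric L M j x : (2 <= L)%Z -> 8 * IZR L ^ 2 <= INR M -> (1 <= x)%Z ->
  inside L (j * M) x <= (/ 2) ^ j.
Proof.
  intros HL HM. assert (HL' : 2 <= IZR L) by (apply IZR_le; lia).
  assert (HM1 : (1 <= M)%nat) by (destruct M; [simpl in HM; nra | lia]).
  assert (Hhalf : forall y, (1 <= y)%Z -> inside L M y <= / 2).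
  { intros y Hy. apply Rle_trans with (4 * IZR L ^ 2 / INR M).
    - apply inside_decay; auto.
    - apply Rle_div_l; nra. }
  induction j as [|j IH]; intro Hx.
  - rewrite Nat.mul_0_l, pow_O. pose proof (inside_unit L 0 x Hx). lra.
  - replace (S j * M)%nat with (j * M + M)%nat by lia.
    pose proof (inside_submult L (j * M) M (/ 2) x ltac:(lra) Hhalf Hx).
    pose proof (IH Hx). simpl pow. lra.
Qed.

(* Started from 1, the walk must first reach 2 (probability 1/2) and then, within
   each period of n+1 steps, either avoid 1 or be restarted from 1. *)
Lemma surv_one_bound n j m : (j * (n + 1) <= m)%nat ->
  surv m 1 <= 2 * avoid n 2 + (/ 2) ^ j.
Proof.
  pose proof (avoid_unit n 2 ltac:(lia)).
  revert m. induction j as [|j IH]; intros m Hm.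
  - pose proof (surv_unit m 1 ltac:(lia)). simpl. lra.
  - destruct m as [|m']; [simpl in Hm; lia|].
    rewrite surv_S_one.
    assert (Hm' : (j * (n + 1) <= m' - n)%nat) by (simpl in Hm; lia).
    pose proof (IH (m' - n)%nat Hm').
    replace m' with (n + (m' - n))%nat at 1 by (simpl in Hm; lia).
    pose proof (surv_split n (m' - n) 2 ltac:(lia)).
    simpl pow. lra.
Qed.

Lemma surv_upper L M j s x : (2 <= L)%Z -> 8 * IZR L ^ 2 <= INR M ->
  (j * M + j * (j * M + 1) <= s)%nat -> (1 <= x)%Z ->
  surv s x <= IZR x ^ 2 / IZR L ^ 2 + 8 / IZR L ^ 2 + 4 * (/ 2) ^ j.
Proof.
  intros HL HM Hs Hx.
  pose proof (inside_geometric L M j x HL HM Hx).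
  pose proof (inside_geometric L M j 2 HL HM ltac:(lia)).
  set (n := (j * M)%nat) in *.
  pose proof (surv_antitone (n + j * (n + 1)) s x Hs Hx).
  pose proof (surv_split n (j * (n + 1)) x Hx).
  pose proof (surv_one_bound n j (j * (n + 1)) ltac:(lia)).
  pose proof (avoid_le_inside L n x HL Hx).
  pose proof (avoid_le_inside L n 2 HL ltac:(lia)).
  replace (IZR 2 ^ 2) with 4 in * by (simpl; ring).
  unfold Rdiv in *. lra.
Qed.

End DriftedWalk.

Lemma down_far x : (x <> 1)%Z -> down x = (x - 1)%Z.
Proof. intro H. unfold down. rewrite (proj2 (Z.eqb_neq x 1%Z) H). reflexivity. Qed.

Lemma up_far x : x <> (-1)%Z -> Defs.up x = (x + 1)%Z.
Proof. intro H. unfold Defs.up. rewrite (proj2 (Z.eqb_neq x (-1)%Z) H). reflexivity. Qed.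

Lemma cedge_pos beta x : (1 <= x)%Z -> cedge beta x = Rpower (IZR x) (- beta).
Proof. intro H. unfold cedge. rewrite (proj2 (Z.leb_le 1%Z x) H). reflexivity. Qed.

Lemma cedge_neg beta x : (x <= -2)%Z -> cedge beta x = Rpower (IZR (- x - 1)) (- beta).
Proof.
  intro H. unfold cedge.
  rewrite (proj2 (Z.leb_gt 1%Z x)), (proj2 (Z.eqb_neq x (-1)%Z)), (proj2 (Z.leb_le x (-2)%Z))
    by lia. reflexivity.
Qed.

(* Conductances of the two edges at distance y >= 2 from the origin: the inner edge
   {y-1, y} and the outer edge {y, y+1} (and their mirror images). *)
Definition w_in (beta : R) (y : Z) : R := Rpower (IZR (y - 1)) (- beta).
Definition w_out (beta : R) (y : Z) : R := Rpower (IZR y) (- beta).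

Lemma edges_pos beta y : (2 <= y)%Z ->
  cedge beta (down y) = w_in beta y /\ cedge beta y = w_out beta y.
Proof. intro H. rewrite down_far, !cedge_pos by lia. split; reflexivity. Qed.

Lemma edges_neg beta y : (2 <= y)%Z ->
  cedge beta (down (- y)) = w_out beta y /\ cedge beta (- y) = w_in beta y.
Proof.
  intro H. rewrite down_far, !cedge_neg by lia. unfold w_in, w_out.
  split; do 3 f_equal; lia.
Qed.

(* Away from +-1 the self-loop doubles the mass, so the walk is lazy. *)
Lemma pi_far beta x : (x <= -2 \/ 2 <= x)%Z ->
  pi beta x = 2 * (cedge beta (down x) + cedge beta x).
Proof.
  intro H. unfold pi, cself.
  rewrite (proj2 (Z.eqb_neq x 0%Z)), (proj2 (Z.eqb_neq x 1%Z)), (proj2 (Z.eqb_neq x (-1)%Z))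
    by lia. simpl. ring.
Qed.

Lemma edges_far beta x : (x <= -2 \/ 2 <= x)%Z ->
  exists y, (2 <= y)%Z /\
    ((cedge beta (down x) = w_in beta y /\ cedge beta x = w_out beta y) \/
     (cedge beta (down x) = w_out beta y /\ cedge beta x = w_in beta y)).
Proof.
  intros [H | H].
  - exists (- x)%Z. split; [lia|]. right. replace x with (- - x)%Z at 1 3 by lia.
    apply edges_neg; lia.
  - exists x. split; [lia|]. left. apply edges_pos; lia.
Qed.

Lemma pstay_far beta x : (x <= -2 \/ 2 <= x)%Z -> pstay beta x = / 2.
Proof.
  intro H. unfold pstay. rewrite pi_far by auto. unfold cself.
  rewrite (proj2 (Z.eqb_neq x 0%Z)), (proj2 (Z.eqb_neq x 1%Z)), (proj2 (Z.eqb_neq x (-1)%Z))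
    by lia. simpl.
  destruct (edges_far beta x H) as (y & _ & [[-> ->] | [-> ->]]);
    unfold w_in, w_out; pose proof (Rpower_pos (IZR (y - 1)) (- beta));
    pose proof (Rpower_pos (IZR y) (- beta)); field; lra.
Qed.

Lemma moves_pos beta y : (2 <= y)%Z ->
  pdown beta y = w_in beta y / (2 * (w_in beta y + w_out beta y)) /\
  pup beta y = w_out beta y / (2 * (w_in beta y + w_out beta y)).
Proof.
  intro H. unfold pdown, pup. rewrite pi_far by lia.
  destruct (edges_pos beta y H) as [-> ->]. auto.
Qed.

Lemma moves_reflect beta y : (2 <= y)%Z ->
  pdown beta (- y) = pup beta y /\ pup beta (- y) = pdown beta y.
Proof.
  intro H. unfold pdown, pup. rewrite !pi_far by lia.
  destruct (edges_neg beta y H) as [-> ->]. destruct (edges_pos beta y H) as [-> ->].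
  split; f_equal; ring.
Qed.

Lemma cedge_one beta : cedge beta 1 = 1.
Proof. unfold cedge; simpl. apply Rpower_1_base. Qed.
Lemma cedge_minus_two beta : cedge beta (-2) = 1.
Proof. unfold cedge; simpl. apply Rpower_1_base. Qed.

Lemma pi_one beta : pi beta 1 = 2.
Proof. unfold pi, cself. simpl. rewrite cedge_one. unfold cedge. simpl. lra. Qed.
Lemma pi_minus_one beta : pi beta (-1) = 2.
Proof. unfold pi, cself. simpl. rewrite cedge_minus_two. unfold cedge. simpl. lra. Qed.

Lemma moves_one beta : pdown beta 1 = / 4 /\ pstay beta 1 = / 4 /\ pup beta 1 = / 2.
Proof.
  unfold pdown, pstay, pup. rewrite pi_one, cedge_one. unfold cself, cedge. simpl. lra.
Qed.

Lemma moves_minus_one beta :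
  pdown beta (-1) = / 2 /\ pstay beta (-1) = / 4 /\ pup beta (-1) = / 4.
Proof.
  unfold pdown, pstay, pup. rewrite pi_minus_one. unfold down. simpl.
  rewrite cedge_minus_two. unfold cself, cedge. simpl. lra.
Qed.

Section Walk.

Variable beta : R.
Hypothesis hbeta : 1 < beta < 2.

(* Comparison of the inner and outer conductances at distance y >= 2, from
   (y-1)^{1-beta} >= y^{1-beta} (beta > 1) and (y-1)^{2-beta} <= y^{2-beta} (beta < 2). *)
Lemma w_in_lower y : (2 <= y)%Z -> w_out beta y * IZR y <= w_in beta y * (IZR y - 1).
Proof.
  intro Hy. unfold w_in, w_out. assert (HY : 2 <= IZR y) by (apply IZR_le; lia).
  rewrite minus_IZR. rewrite <- (Rpower_1 (IZR y)) at 2 by lra.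
  rewrite <- (Rpower_1 (IZR y - 1)) at 2 by lra. rewrite <- !Rpower_plus.
  apply Rpower_le_neg; lra.
Qed.

Lemma w_in_upper y : (2 <= y)%Z -> w_in beta y * (IZR y - 1) ^ 2 <= w_out beta y * IZR y ^ 2.
Proof.
  intro Hy. unfold w_in, w_out. assert (HY : 2 <= IZR y) by (apply IZR_le; lia).
  rewrite minus_IZR, <- !(Rpower_pow 2) by lra. rewrite <- !Rpower_plus.
  apply Rle_Rpower_l; simpl; lra.
Qed.

Lemma pdown_nonneg y : (2 <= y)%Z -> 0 <= pdown beta y.
Proof.
  intro Hy. destruct (moves_pos beta y Hy) as [-> _]. unfold w_in, w_out.
  pose proof (Rpower_pos (IZR (y - 1)) (- beta)). pose proof (Rpower_pos (IZR y) (- beta)).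
  apply Rdiv_le_0_compat; lra.
Qed.

Lemma pup_nonneg y : (2 <= y)%Z -> 0 <= pup beta y.
Proof.
  intro Hy. destruct (moves_pos beta y Hy) as [_ ->]. unfold w_in, w_out.
  pose proof (Rpower_pos (IZR (y - 1)) (- beta)). pose proof (Rpower_pos (IZR y) (- beta)).
  apply Rdiv_le_0_compat; lra.
Qed.

Lemma moves_half y : (2 <= y)%Z -> pdown beta y + pup beta y = / 2.
Proof.
  intro Hy. destruct (moves_pos beta y Hy) as [-> ->]. unfold w_in, w_out.
  pose proof (Rpower_pos (IZR (y - 1)) (- beta)). pose proof (Rpower_pos (IZR y) (- beta)).
  field. lra.
Qed.

(* Its drift towards the origin is of order 1/y; this is where 1 < beta < 2 is used. *)
Lemma drift_pos_lower y : (2 <= y)%Z -> / (2 * (2 * IZR y - 1)) <= pdown beta y - pup beta y.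
Proof.
  intro Hy. pose proof (w_in_lower y Hy). destruct (moves_pos beta y Hy) as [-> ->].
  assert (HY : 2 <= IZR y) by (apply IZR_le; lia).
  pose proof (Rpower_pos (IZR (y - 1)) (- beta)). pose proof (Rpower_pos (IZR y) (- beta)).
  fold (w_in beta y) (w_out beta y) in *.
  replace (w_in beta y / (2 * (w_in beta y + w_out beta y)) -
           w_out beta y / (2 * (w_in beta y + w_out beta y)))
    with ((w_in beta y - w_out beta y) / (2 * (w_in beta y + w_out beta y))) by (field; lra).
  rewrite <- Rdiv_1_l. apply Rdiv_le_cross; lra.
Qed.

Lemma drift_pos_upper y : (2 <= y)%Z -> pdown beta y - pup beta y <= 6 / IZR y.
Proof.
  intro Hy. pose proof (w_in_lower y Hy). pose proof (w_in_upper y Hy).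
  destruct (moves_pos beta y Hy) as [-> ->].
  assert (HY : 2 <= IZR y) by (apply IZR_le; lia).
  pose proof (Rpower_pos (IZR (y - 1)) (- beta)). pose proof (Rpower_pos (IZR y) (- beta)).
  fold (w_in beta y) (w_out beta y) in *.
  set (A := w_in beta y) in *. set (B := w_out beta y) in *. set (Y := IZR y) in *.
  replace (A / (2 * (A + B)) - B / (2 * (A + B))) with ((A - B) / (2 * (A + B)))
    by (field; lra).
  (* A - B <= B (2Y-1) / (Y-1)^2 and Y (2Y-1) <= 12 (Y-1)^2 *)
  assert (Hexcess : (A - B) * (Y - 1) ^ 2 <= B * (2 * Y - 1)) by nra.
  assert (Hpoly : Y * (2 * Y - 1) <= 12 * (Y - 1) ^ 2) by nra.
  assert (Hkey : (A - B) * Y <= 12 * (A + B)).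
  { apply Rmult_le_reg_r with ((Y - 1) ^ 2); [nra|].
    assert (0 <= B * (12 * (Y - 1) ^ 2 - Y * (2 * Y - 1))) by (apply Rmult_le_pos; lra).
    assert (0 <= Y * (B * (2 * Y - 1) - (A - B) * (Y - 1) ^ 2)) by (apply Rmult_le_pos; lra).
    assert (0 <= A * (Y - 1) ^ 2) by (apply Rmult_le_pos; nra).
    nra. }
  apply Rdiv_le_cross; lra.
Qed.

(* [P_x[Y_t in C]] for the walk on Z* is expressed through the survival probability of
   the drifted walk killed at 1: positive and negative starting points are mirror
   images, and the mass 1/4 is the equilibrium value. *)
Definition odd_part (t : nat) (x : Z) : R := surv (pdown beta) (pup beta) t x.

Lemma odd_part_unit t x : (1 <= x)%Z -> 0 <= odd_part t x <= 1.
Proof. apply surv_unit; [exact pdown_nonneg | exact pup_nonneg | exact moves_half]. Qed.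

Lemma odd_part_S t x : (2 <= x)%Z -> odd_part (S t) x =
  pdown beta x * odd_part t (x - 1) + / 2 * odd_part t x + pup beta x * odd_part t (x + 1).
Proof. intro Hx. unfold odd_part. rewrite surv_S_ge2 by auto. reflexivity. Qed.

Lemma indC_cases x : (2 <= x)%Z ->
  (indC x = 1 /\ indC (x - 1) = 0 /\ indC (x + 1) = 0) \/
  (indC x = 0 /\ indC (x - 1) = 1 /\ indC (x + 1) = 1).
Proof.
  intro H. unfold indC.
  rewrite (proj2 (Z.ltb_lt 0 x)), (proj2 (Z.ltb_lt 0 (x - 1))), (proj2 (Z.ltb_lt 0 (x + 1)))
    by lia.
  rewrite Z.even_sub, Z.even_add. simpl. destruct (Z.even x); simpl; [left | right]; auto.
Qed.

Lemma indC_nonpos x : (x <= 1)%Z -> indC x = 0.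
Proof.
  intro H. unfold indC. destruct (Z.eq_dec x 1) as [-> | ]; [reflexivity|].
  rewrite (proj2 (Z.ltb_ge 0 x)) by lia. reflexivity.
Qed.

Lemma hitC_odd_part t x :
  ((1 <= x)%Z -> hitC beta (S t) x = / 4 + odd_part t x / 4) /\
  ((x <= -1)%Z -> hitC beta (S t) x = / 4 - odd_part t (- x) / 4).
Proof.
  revert x. induction t as [|t IH]; intro x.
  - unfold odd_part. simpl surv. split; intro Hx; simpl hitC.
    + destruct (Z.eq_dec x 1) as [-> | Hx1].
      * destruct (moves_one beta) as (-> & -> & ->). unfold down, Defs.up, indC. simpl. lra.
      * rewrite down_far, up_far, pstay_far by lia. pose proof (moves_half x ltac:(lia)).
        destruct (indC_cases x ltac:(lia)) as [(-> & -> & ->) | (-> & -> & ->)]; lra.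
    + destruct (Z.eq_dec x (-1)) as [-> | Hx1].
      * destruct (moves_minus_one beta) as (-> & -> & ->). unfold down, Defs.up, indC. simpl. lra.
      * rewrite down_far, up_far, !indC_nonpos by lia. lra.
  - change (hitC beta (S (S t)) x) with
      (pdown beta x * hitC beta (S t) (down x) + pstay beta x * hitC beta (S t) x
       + pup beta x * hitC beta (S t) (Defs.up x)).
    split; intro Hx.
    + destruct (Z.eq_dec x 1) as [-> | Hx1].
      * destruct (moves_one beta) as (-> & -> & ->).
        replace (down 1) with (-1)%Z by reflexivity. replace (Defs.up 1) with 2%Z by reflexivity.
        rewrite (proj2 (IH (-1)%Z)), (proj1 (IH 1%Z)), (proj1 (IH 2%Z)) by lia.
        unfold odd_part. rewrite surv_S_one. simpl Z.opp. lra.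
      * rewrite down_far, up_far, pstay_far, odd_part_S by lia.
        rewrite (proj1 (IH (x - 1)%Z)), (proj1 (IH x)), (proj1 (IH (x + 1)%Z)) by lia.
        pose proof (moves_half x ltac:(lia)). lra.
    + destruct (Z.eq_dec x (-1)) as [-> | Hx1].
      * destruct (moves_minus_one beta) as (-> & -> & ->).
        replace (down (-1)) with (-2)%Z by reflexivity.
        replace (Defs.up (-1)) with 1%Z by reflexivity.
        rewrite (proj2 (IH (-2)%Z)), (proj2 (IH (-1)%Z)), (proj1 (IH 1%Z)) by lia.
        unfold odd_part. rewrite surv_S_one. simpl Z.opp. lra.
      * set (y := (- x)%Z). replace x with (- y)%Z in * by (unfold y; lia).
        rewrite down_far, up_far, pstay_far by lia.
        rewrite (proj2 (IH (- y - 1)%Z)), (proj2 (IH (- y)%Z)), (proj2 (IH (- y + 1)%Z)) by lia.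
        destruct (moves_reflect beta y ltac:(lia)) as [-> ->].
        replace (- (- y - 1))%Z with (y + 1)%Z by lia.
        replace (- (- y + 1))%Z with (y - 1)%Z by lia.
        replace (- - y)%Z with y by lia.
        rewrite odd_part_S by lia. pose proof (moves_half y ltac:(lia)). lra.
Qed.

(* From an even site the walk never moves to another even site, so staying in C
   for t steps means staying put t times. *)
Lemma stayC_geometric t x : stayC beta t x = indC x * (/ 2) ^ t.
Proof.
  revert x. induction t as [|t IH]; intro x; [simpl; ring|].
  simpl stayC. rewrite !IH.
  destruct (Z_le_gt_dec x 1) as [Hx | Hx]; [rewrite indC_nonpos by lia; ring|].
  rewrite down_far, up_far, pstay_far by lia.
  destruct (indC_cases x ltac:(lia)) as [(-> & -> & ->) | (-> & _ & _)]; simpl; ring.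
Qed.

End Walk.

Lemma series_cv a : ex_series a -> Un_cv (sum_f_R0 a) (Series a).
Proof. intro H. apply is_series_Reals, Series_correct, H. Qed.

Lemma ex_series_bounded a B : (forall n, 0 <= a n) -> (forall N, sum_f_R0 a N <= B) ->
  ex_series a.
Proof.
  intros Ha HB. destruct (growing_cv (sum_f_R0 a)) as [l Hl].
  - intro n. simpl. pose proof (Ha (S n)). lra.
  - exists B. intros x [n ->]. apply HB.
  - exists l. apply is_series_Reals. exact Hl.
Qed.

Lemma ex_series_dominated a b : (forall n, 0 <= a n <= b n) -> ex_series b -> ex_series a.
Proof.
  intros H Hb. apply (ex_series_le a b); auto.
  intro n. change (norm (a n)) with (Rabs (a n)). rewrite Rabs_pos_eq; apply H.
Qed.

Lemma partial_le_series a N : (forall n, 0 <= a n) -> ex_series a -> sum_f_R0 a N <= Series a.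
Proof. intros Hp Ha. apply sum_incr; auto. apply series_cv; auto. Qed.

Lemma series_le_bound a B : ex_series a -> (forall N, sum_f_R0 a N <= B) -> Series a <= B.
Proof.
  intros Ha HB. apply Rle_cv_lim with (sum_f_R0 a) (fun _ => B); auto.
  - apply series_cv; auto.
  - intros e He; exists 0%nat; intros; unfold Rdist; rewrite Rminus_diag, Rabs_R0; lra.
Qed.

Lemma sum_telescope G N : sum_f_R0 (fun i => G i - G (S i)) N = G 0%nat - G (S N).
Proof. induction N; simpl; [ring | rewrite IHN; ring]. Qed.

Definition zterm (beta : R) (k : nat) : R := Rpower (INR k + 1) (- beta).

Lemma zterm_0 beta : zterm beta 0 = 1.
Proof. unfold zterm. simpl. rewrite Rplus_0_l. apply Rpower_1_base. Qed.

(* Comparison with the integral of y^{-beta} on [k+1, k+2]. *)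
Lemma zterm_telescope beta k : 1 < beta -> (beta - 1) * zterm beta (S k) <=
  Rpower (INR (S k)) (- (beta - 1)) - Rpower (INR (S (S k))) (- (beta - 1)).
Proof.
  intro Hb. unfold zterm. rewrite (S_INR (S k)).
  pose proof (power_telescope beta (INR (S k) + 1) Hb) as H.
  replace (INR (S k) + 1 - 1) with (INR (S k)) in H by ring.
  apply H. rewrite S_INR. pose proof (pos_INR k). lra.
Qed.

Lemma zterm_summable beta : 1 < beta -> ex_series (zterm beta).
Proof.
  intro Hb. apply ex_series_bounded with (1 + 1 / (beta - 1)).
  - intro; left; apply Rpower_pos.
  - assert (Hpart : forall N, sum_f_R0 (zterm beta) N <=
                    1 + (1 - Rpower (INR (S N)) (- (beta - 1))) / (beta - 1)).
    { induction N as [|N IH].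
      - simpl. rewrite zterm_0, Rpower_1_base. unfold Rdiv. lra.
      - simpl sum_f_R0. pose proof (zterm_telescope beta N Hb).
        assert (zterm beta (S N) <= (Rpower (INR (S N)) (- (beta - 1))
                  - Rpower (INR (S (S N))) (- (beta - 1))) / (beta - 1))
          by (apply Rle_div_r; lra).
        unfold Rdiv in *. lra. }
    intro N. pose proof (Hpart N). pose proof (Rpower_pos (INR (S N)) (- (beta - 1))).
    assert (0 < / (beta - 1)) by (apply Rinv_0_lt_compat; lra).
    unfold Rdiv in *. nra.
Qed.

Definition xC (n : nat) : Z := (2 * Z.of_nat (S n))%Z.

Lemma xC_ge2 n : (2 <= xC n)%Z.
Proof. unfold xC. lia. Qed.

Lemma IZR_xC n : IZR (xC n) = 2 * INR n + 2.
Proof. unfold xC. rewrite mult_IZR, <- INR_IZR_INZ, S_INR. simpl. ring. Qed.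

Lemma indC_xC n : indC (xC n) = 1.
Proof. unfold indC, xC. rewrite (proj2 (Z.ltb_lt 0 _)) by lia. rewrite Z.even_mul. reflexivity. Qed.

Lemma pi_shift beta k : pi beta (Z.of_nat (S (S k))) = 2 * (zterm beta k + zterm beta (S k)).
Proof.
  rewrite pi_far by lia. destruct (edges_pos beta (Z.of_nat (S (S k))) ltac:(lia)) as [-> ->].
  unfold w_in, w_out, zterm. rewrite minus_IZR, <- INR_IZR_INZ, !S_INR.
  do 2 f_equal; f_equal; ring.
Qed.

Lemma pi_xC beta n : pi beta (xC n) = 2 * (zterm beta (2 * n) + zterm beta (S (2 * n))).
Proof.
  replace (xC n) with (Z.of_nat (S (S (2 * n)))) by (unfold xC; lia). apply pi_shift.
Qed.

Lemma pi_reflect beta n : pi beta (- Z.of_nat (S n)) = pi beta (Z.of_nat (S n)).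
Proof.
  destruct n as [|n].
  - simpl. rewrite pi_one, pi_minus_one. reflexivity.
  - rewrite !pi_far by lia.
    destruct (edges_pos beta (Z.of_nat (S (S n))) ltac:(lia)) as [-> ->].
    destruct (edges_neg beta (Z.of_nat (S (S n))) ltac:(lia)) as [-> ->]. ring.
Qed.

Lemma sum_pi_pos beta N :
  sum_f_R0 (fun n => pi beta (Z.of_nat (S n))) N = 4 * sum_f_R0 (zterm beta) N - 2 * zterm beta N.
Proof.
  induction N as [|N IH].
  - simpl. rewrite pi_one, zterm_0. ring.
  - rewrite !tech5, IH, pi_shift. ring.
Qed.

Lemma sum_pi_xC beta N :
  sum_f_R0 (fun n => pi beta (xC n)) N = 2 * sum_f_R0 (zterm beta) (S (2 * N)).
Proof.
  induction N as [|N IH].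
  - simpl. rewrite pi_xC. simpl. ring.
  - rewrite tech5, IH, pi_xC. replace (S (2 * S N)) with (S (S (S (2 * N)))) by lia.
    rewrite !tech5. replace (2 * S N)%nat with (S (S (2 * N))) by lia. ring.
Qed.

Lemma stationary_masses beta : 1 < beta ->
  sumZstar (pi beta) (8 * Series (zterm beta)) /\ sumC (pi beta) (2 * Series (zterm beta)).
Proof.
  intro Hb. pose proof (zterm_summable beta Hb) as Hex.
  pose proof (series_cv _ Hex) as Hcv. apply is_lim_seq_Reals in Hcv.
  assert (Hzero : is_lim_seq (zterm beta) 0) by (apply ex_series_lim_0; auto).
  split.
  - unfold sumZstar. apply is_lim_seq_Reals.
    apply is_lim_seq_ext with (fun N => 2 * (4 * sum_f_R0 (zterm beta) N - 2 * zterm beta N)).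
    { intro N. rewrite <- sum_pi_pos. induction N as [|N IH].
      - simpl. rewrite pi_one, pi_minus_one. ring.
      - rewrite !tech5, <- IH, pi_reflect. ring. }
    replace (8 * Series (zterm beta)) with (2 * (4 * Series (zterm beta) - 2 * 0)) by ring.
    apply is_lim_seq_mult'; [apply is_lim_seq_const|].
    apply is_lim_seq_minus'; apply is_lim_seq_mult'; auto; apply is_lim_seq_const.
  - unfold sumC. apply is_lim_seq_Reals.
    apply is_lim_seq_ext with (fun N => 2 * sum_f_R0 (zterm beta) (S (2 * N))).
    { intro N. rewrite sum_pi_xC. reflexivity. }
    apply is_lim_seq_mult'; [apply is_lim_seq_const|].
    apply (is_lim_seq_subseq (sum_f_R0 (zterm beta)) _ (fun N => S (2 * N))); auto.
    apply eventually_subseq. intro; lia.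
Qed.

Section Correlation.

Variable beta : R.
Hypothesis hbeta : 1 < beta < 2.

Lemma pi_xC_bounds n :
  2 * Rpower (2 * INR n + 2) (- beta) <= pi beta (xC n) <= 4 * Rpower (2 * INR n + 1) (- beta).
Proof.
  rewrite pi_xC. unfold zterm.
  replace (INR (2 * n) + 1) with (2 * INR n + 1) by (rewrite mult_INR; simpl; ring).
  replace (INR (S (2 * n)) + 1) with (2 * INR n + 2) by (rewrite S_INR, mult_INR; simpl; ring).
  pose proof (pos_INR n).
  assert (Rpower (2 * INR n + 2) (- beta) <= Rpower (2 * INR n + 1) (- beta))
    by (apply Rpower_le_neg; lra).
  pose proof (Rpower_pos (2 * INR n + 2) (- beta)). lra.
Qed.

Lemma pi_xC_pos n : 0 < pi beta (xC n).
Proof. pose proof (pi_xC_bounds n). pose proof (Rpower_pos (2 * INR n + 2) (- beta)). lra. Qed.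

Lemma mass_C_series : is_series (fun n => pi beta (xC n)) (2 * Series (zterm beta)).
Proof. apply is_series_Reals, (proj2 (stationary_masses beta ltac:(lra))). Qed.

Lemma mass_C_summable : ex_series (fun n => pi beta (xC n)).
Proof. eexists. apply mass_C_series. Qed.

Lemma mass_C_pos : 0 < 2 * Series (zterm beta).
Proof.
  rewrite <- (is_series_unique _ _ mass_C_series).
  apply Rlt_le_trans with (sum_f_R0 (fun n => pi beta (xC n)) 0); [apply pi_xC_pos|].
  apply partial_le_series; [intro; left; apply pi_xC_pos | apply mass_C_summable].
Qed.

Definition corr (s : nat) : R := Series (fun n => pi beta (xC n) * odd_part beta s (xC n)).

Lemma corr_term_bounds s n :
  0 <= pi beta (xC n) * odd_part beta s (xC n) <= pi beta (xC n).
Proof.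
  pose proof (pi_xC_pos n).
  pose proof (odd_part_unit beta s (xC n) ltac:(pose proof (xC_ge2 n); lia)).
  split; nra.
Qed.

Lemma corr_summable s : ex_series (fun n => pi beta (xC n) * odd_part beta s (xC n)).
Proof.
  apply ex_series_dominated with (fun n => pi beta (xC n));
    [apply corr_term_bounds | apply mass_C_summable].
Qed.

(* Lower bound: the sites at distance ~ sqrt s from 0 still carry survival >= 1/2. *)
Lemma corr_block_term K i s : (10 <= K)%nat -> (4 * i <= K)%nat ->
  400 * INR s <= (2 * INR K + 2) ^ 2 ->
  Rpower (8 * INR K) (- beta) <= pi beta (xC (K + i)) * odd_part beta s (xC (K + i)).
Proof.
  intros HK Hi Hs.
  assert (HKR : 10 <= INR K) by (apply (le_INR 10) in HK; simpl in HK; lra).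
  assert (HiR : 4 * INR i <= INR K)
    by (apply le_INR in Hi; rewrite mult_INR in Hi; simpl in Hi; lra).
  pose proof (pos_INR i).
  assert (Hu : / 2 <= odd_part beta s (xC (K + i))).
  { apply (surv_half _ _ (pdown_nonneg beta) (pup_nonneg beta) (moves_half beta)
           (drift_pos_lower beta hbeta) (drift_pos_upper beta hbeta) (2 * INR K + 2)); try lra.
    - pose proof (xC_ge2 (K + i)). lia.
    - rewrite IZR_xC, plus_INR. lra. }
  destruct (pi_xC_bounds (K + i)) as [Hp _]. rewrite plus_INR in Hp.
  assert (Rpower (8 * INR K) (- beta) <= Rpower (2 * (INR K + INR i) + 2) (- beta))
    by (apply Rpower_le_neg; lra).
  pose proof (Rpower_pos (8 * INR K) (- beta)). pose proof (pi_xC_pos (K + i)).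
  nra.
Qed.

Lemma corr_ge_block K q s : (1 <= K)%nat ->
  sum_f_R0 (fun i => pi beta (xC (K + i)) * odd_part beta s (xC (K + i))) q <= corr s.
Proof.
  intro HK. unfold corr. rewrite (Series_incr_n _ K) by (auto; apply corr_summable).
  assert (0 <= sum_f_R0 (fun n => pi beta (xC n) * odd_part beta s (xC n)) (Init.Nat.pred K)).
  { apply cond_pos_sum. intro; apply corr_term_bounds. }
  assert (sum_f_R0 (fun i => pi beta (xC (K + i)) * odd_part beta s (xC (K + i))) q
          <= Series (fun i => pi beta (xC (K + i)) * odd_part beta s (xC (K + i)))).
  { apply partial_le_series; [intro; apply corr_term_bounds|].
    apply (ex_series_incr_n (fun n => pi beta (xC n) * odd_part beta s (xC n))), corr_summable. }
  lra.
Qed.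

Lemma corr_lower s : (1 <= s)%nat ->
  (/ 4 * Rpower 8 (- beta) * Rpower 20 (1 - beta)) * Rpower (INR s) ((1 - beta) / 2) <= corr s.
Proof.
  intro Hs. set (K := (10 * (Nat.sqrt s + 1))%nat). set (q := (K / 4)%nat).
  assert (HK10 : (10 <= K)%nat) by (unfold K; lia).
  assert (Hq1 : (K < 4 * S q)%nat).
  { unfold q. pose proof (Nat.div_mod K 4 ltac:(lia)).
    pose proof (Nat.mod_upper_bound K 4 ltac:(lia)). lia. }
  assert (Hq2 : (4 * q <= K)%nat) by (unfold q; pose proof (Nat.div_mod K 4 ltac:(lia)); lia).
  assert (HsR : 1 <= INR s) by (apply (le_INR 1); auto).
  assert (Hsqrt : 1 <= sqrt (INR s)) by (rewrite <- sqrt_1; apply sqrt_le_1_alt; auto).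
  destruct (nat_sqrt_bounds s) as [Hnsq Hsq].
  assert (Hs_sq : INR s < (INR (Nat.sqrt s) + 1) ^ 2).
  { rewrite <- (sqrt_sqrt (INR s)) by lra. pose proof (sqrt_pos (INR s)). nra. }
  assert (HKdef : INR K = 10 * (INR (Nat.sqrt s) + 1))
    by (unfold K; rewrite mult_INR, plus_INR; simpl; ring).
  pose proof (pos_INR (Nat.sqrt s)).
  (* every block term is at least c, and there are more than K/4 of them *)
  set (c := Rpower (8 * INR K) (- beta)).
  assert (Hblock : c * INR (S q) <= corr s).
  { apply Rle_trans with (2 := corr_ge_block K q s ltac:(lia)).
    rewrite <- sum_cte. apply sum_Rle. intros i Hi. apply corr_block_term; [lia | lia | nra]. }
  assert (HqR : INR K / 4 <= INR (S q))
    by (apply lt_INR in Hq1; rewrite mult_INR in Hq1;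
        replace (INR 4) with 4 in Hq1 by (simpl; ring); lra).
  (* c * K / 4 = 8^{-beta} K^{1-beta} / 4 and K <= 20 sqrt s *)
  assert (Hc : c * (INR K / 4) = / 4 * Rpower 8 (- beta) * Rpower (INR K) (1 - beta)).
  { unfold c. rewrite <- Rpower_mult_distr by lra.
    replace (1 - beta) with (1 + - beta) by ring. rewrite Rpower_plus, Rpower_1 by lra. field. }
  assert (Hmono : Rpower (20 * sqrt (INR s)) (1 - beta) <= Rpower (INR K) (1 - beta))
    by (apply Rpower_le_neg; lra).
  rewrite <- Rpower_mult_distr, <- Rpower_sqrt, Rpower_mult in Hmono by lra.
  replace (/ 2 * (1 - beta)) with ((1 - beta) / 2) in Hmono by field.
  pose proof (Rpower_pos 8 (- beta)).
  assert (0 < c) by apply Rpower_pos.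
  assert (c * (INR K / 4) <= c * INR (S q)) by (apply Rmult_le_compat_l; lra).
  assert (/ 4 * Rpower 8 (- beta) * (Rpower 20 (1 - beta) * Rpower (INR s) ((1 - beta) / 2))
          <= / 4 * Rpower 8 (- beta) * Rpower (INR K) (1 - beta))
    by (apply Rmult_le_compat_l; lra).
  lra.
Qed.

(* Upper bound.  Split C at the site 2K ~ sqrt s / log s: far sites have small total
   mass, near sites x have survival at most x^2/(2K)^2 + O(1/K) by [surv_upper]. *)
Lemma pi_xC_telescope n : (1 <= n)%nat ->
  pi beta (xC n) <= 4 / (beta - 1) *
    (Rpower (2 * INR n) (- (beta - 1)) - Rpower (2 * INR n + 2) (- (beta - 1))).
Proof.
  intro Hn. assert (HnR : 1 <= INR n) by (apply (le_INR 1); auto).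
  destruct (pi_xC_bounds n) as [_ Hp].
  pose proof (power_telescope beta (2 * INR n + 1) ltac:(lra) ltac:(lra)) as Ht.
  replace (2 * INR n + 1 - 1) with (2 * INR n) in Ht by ring.
  assert (Rpower (2 * INR n + 2) (- (beta - 1)) <= Rpower (2 * INR n + 1) (- (beta - 1)))
    by (apply Rpower_le_neg; lra).
  apply Rle_trans with (1 := Hp).
  set (D := Rpower (2 * INR n) (- (beta - 1)) - Rpower (2 * INR n + 2) (- (beta - 1))).
  replace (4 / (beta - 1) * D) with (4 * (D / (beta - 1))) by (field; lra).
  apply Rmult_le_compat_l; [lra|]. apply Rle_div_r; unfold D; lra.
Qed.

Lemma mass_C_tail K N : (1 <= K)%nat ->
  sum_f_R0 (fun i => pi beta (xC (K + i))) N <= 4 / (beta - 1) * Rpower (2 * INR K) (- (beta - 1)).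
Proof.
  intro HK. set (G := fun i => 4 / (beta - 1) * Rpower (2 * INR (K + i)) (- (beta - 1))).
  assert (HG : 0 <= G (S N)).
  { unfold G. apply Rmult_le_pos; [apply Rdiv_le_0_compat; lra | left; apply Rpower_pos]. }
  apply Rle_trans with (sum_f_R0 (fun i => G i - G (S i)) N).
  - apply sum_Rle. intros i _. unfold G. pose proof (pi_xC_telescope (K + i) ltac:(lia)).
    replace (2 * INR (K + S i)) with (2 * INR (K + i) + 2) by (rewrite !plus_INR, S_INR; ring).
    lra.
  - rewrite sum_telescope. unfold G at 1. rewrite Nat.add_0_r. lra.
Qed.

Lemma head_term n K : (n < K)%nat ->
  pi beta (xC n) * (IZR (xC n) ^ 2 / (2 * INR K) ^ 2)
  <= 8 * Rpower (2 * INR K) (- (beta - 1)) / INR K.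
Proof.
  intro Hn. assert (HnK : INR n + 1 <= INR K) by (rewrite <- S_INR; apply le_INR; lia).
  pose proof (pos_INR n). destruct (pi_xC_bounds n) as [_ Hp]. rewrite IZR_xC.
  set (y := 2 * INR n + 1) in *.
  (* pi(x) x^2 <= 16 y^{2-beta} <= 16 (2K)^{2-beta} *)
  assert (Hy2 : Rpower y (- beta) * y ^ 2 = Rpower y (2 - beta)).
  { replace (2 - beta) with (- beta + INR 2) by (simpl; ring).
    rewrite Rpower_plus, Rpower_pow by (unfold y; lra). auto. }
  assert (HK2 : Rpower (2 * INR K) (2 - beta) = Rpower (2 * INR K) (- (beta - 1)) * (2 * INR K)).
  { replace (2 - beta) with (- (beta - 1) + 1) by ring.
    rewrite Rpower_plus, Rpower_1 by lra. auto. }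
  assert (Hmono : Rpower y (2 - beta) <= Rpower (2 * INR K) (2 - beta))
    by (apply Rle_Rpower_l; unfold y in *; lra).
  assert (Hsq : (2 * INR n + 2) ^ 2 <= 4 * y ^ 2) by (unfold y; nra).
  pose proof (Rpower_pos y (- beta)). pose proof (pi_xC_pos n).
  assert (Hmain : pi beta (xC n) * (2 * INR n + 2) ^ 2 <= 16 * Rpower (2 * INR K) (2 - beta)).
  { apply Rle_trans with (4 * Rpower y (- beta) * (4 * y ^ 2)); [|nra].
    apply Rmult_le_compat; nra. }
  rewrite HK2 in Hmain. set (R0 := Rpower (2 * INR K) (- (beta - 1))) in *.
  replace (pi beta (xC n) * ((2 * INR n + 2) ^ 2 / (2 * INR K) ^ 2))
    with (pi beta (xC n) * (2 * INR n + 2) ^ 2 / (2 * INR K) ^ 2) by (unfold Rdiv; ring).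
  apply Rdiv_le_cross; [nra | lra | nra].
Qed.

(* The time condition of [surv_upper] for the window L = 2K and period M = 32 K^2. *)
Definition long_enough (K j s : nat) : Prop :=
  (j * (32 * K * K) + j * (j * (32 * K * K) + 1) <= s)%nat.

(* [surv_upper] at the scale L = 2K, with j >= log2 (2K) periods: the additive error
   8/L^2 + 4 * 2^{-j} is at most 8 (2K)^{1-beta}. *)
Lemma odd_part_upper K j s x : (1 <= K)%nat -> (2 * K <= 2 ^ j)%nat -> long_enough K j s ->
  (1 <= x)%Z ->
  odd_part beta s x <= IZR x ^ 2 / (2 * INR K) ^ 2 + 8 * Rpower (2 * INR K) (- (beta - 1)).
Proof.
  intros HK Hj Hs Hx. assert (HKR : 1 <= INR K) by (apply (le_INR 1); auto).
  set (L := (2 * Z.of_nat K)%Z).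
  assert (HLR : IZR L = 2 * INR K) by (unfold L; rewrite mult_IZR, <- INR_IZR_INZ; auto).
  assert (HM : 8 * IZR L ^ 2 <= INR (32 * K * K))
    by (rewrite HLR, !mult_INR; replace (INR 32) with 32 by (simpl; ring); nra).
  pose proof (surv_upper _ _ (pdown_nonneg beta) (pup_nonneg beta) (moves_half beta)
                (drift_pos_lower beta hbeta) L (32 * K * K) j s x
                ltac:(unfold L; lia) HM Hs Hx) as Hu.
  fold (odd_part beta s x) in Hu. rewrite HLR in Hu.
  assert (HR0 : / (2 * INR K) <= Rpower (2 * INR K) (- (beta - 1))).
  { rewrite <- (Rpower_1 (2 * INR K)) at 1 by lra. rewrite <- Rpower_Ropp.
    apply Rle_Rpower; lra. }
  assert (Hpow : (/ 2) ^ j <= / (2 * INR K)).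
  { rewrite pow_inv. apply Rinv_le_contravar; [lra|].
    apply le_INR in Hj. rewrite pow_INR, mult_INR in Hj.
    replace (INR 2) with 2 in Hj by (simpl; ring). lra. }
  assert (8 / (2 * INR K) ^ 2 <= 4 * / (2 * INR K)).
  { apply Rle_div_l; [nra|].
    replace (4 * / (2 * INR K) * (2 * INR K) ^ 2) with (8 * INR K) by (field; lra). lra. }
  lra.
Qed.

Lemma corr_head K j s : (1 <= K)%nat -> (2 * K <= 2 ^ j)%nat -> long_enough K j s ->
  sum_f_R0 (fun n => pi beta (xC n) * odd_part beta s (xC n)) (Init.Nat.pred K)
  <= 8 * Rpower (2 * INR K) (- (beta - 1)) * (1 + 2 * Series (zterm beta)).
Proof.
  intros HK Hj Hs. assert (HKR : 1 <= INR K) by (apply (le_INR 1); auto).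
  set (R0 := Rpower (2 * INR K) (- (beta - 1))).
  apply Rle_trans with
    (sum_f_R0 (fun n => 8 * R0 / INR K + pi beta (xC n) * (8 * R0)) (Init.Nat.pred K)).
  - apply sum_Rle. intros n Hn.
    pose proof (head_term n K ltac:(lia)) as Hh. fold R0 in Hh.
    pose proof (odd_part_upper K j s (xC n) HK Hj Hs ltac:(pose proof (xC_ge2 n); lia)) as Hu.
    fold R0 in Hu. pose proof (pi_xC_pos n).
    assert (pi beta (xC n) * odd_part beta s (xC n) <=
            pi beta (xC n) * (IZR (xC n) ^ 2 / (2 * INR K) ^ 2 + 8 * R0))
      by (apply Rmult_le_compat_l; lra).
    lra.
  - rewrite plus_sum, sum_cte, <- scal_sum. replace (S (Init.Nat.pred K)) with K by lia.
    assert (sum_f_R0 (fun n => pi beta (xC n)) (Init.Nat.pred K) <= 2 * Series (zterm beta)).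
    { rewrite <- (is_series_unique _ _ mass_C_series).
      apply partial_le_series; [intro; left; apply pi_xC_pos | apply mass_C_summable]. }
    assert (0 < R0) by apply Rpower_pos.
    replace (8 * R0 / INR K * INR K) with (8 * R0) by (field; lra). nra.
Qed.

Lemma corr_tail K s : (1 <= K)%nat ->
  Series (fun i => pi beta (xC (K + i)) * odd_part beta s (xC (K + i)))
  <= 4 / (beta - 1) * Rpower (2 * INR K) (- (beta - 1)).
Proof.
  intro HK. pose proof (proj1 (ex_series_incr_n _ K) mass_C_summable) as Hex.
  apply Rle_trans with (Series (fun i => pi beta (xC (K + i)))).
  - apply Series_le; [intro; apply corr_term_bounds | exact Hex].
  - apply series_le_bound; [exact Hex|]. intro N. apply mass_C_tail; auto.
Qed.

Lemma corr_upper K j s : (1 <= K)%nat -> (2 * K <= 2 ^ j)%nat -> long_enough K j s ->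
  corr s <= (8 + 4 / (beta - 1) + 16 * Series (zterm beta)) * Rpower (2 * INR K) (- (beta - 1)).
Proof.
  intros HK Hj Hs. unfold corr. rewrite (Series_incr_n _ K) by (auto; apply corr_summable).
  pose proof (corr_head K j s HK Hj Hs). pose proof (corr_tail K s HK). lra.
Qed.

Lemma hit_series_0 :
  is_series (fun n => pi beta (xC n) * hitC beta 0 (xC n)) (2 * Series (zterm beta)).
Proof.
  apply is_series_ext with (fun n => pi beta (xC n)); [|apply mass_C_series].
  intro n. simpl. rewrite indC_xC. ring.
Qed.

Lemma hit_series_S s : is_series (fun n => pi beta (xC n) * hitC beta (S s) (xC n))
  (/ 4 * (2 * Series (zterm beta)) + / 4 * corr s).
Proof.
  apply is_series_ext with
    (fun n => / 4 * pi beta (xC n) + / 4 * (pi beta (xC n) * odd_part beta s (xC n))).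
  - intro n. rewrite (proj1 (hitC_odd_part beta s (xC n))) by (pose proof (xC_ge2 n); lia). lra.
  - exact (is_series_plus _ _ _ _ (is_series_scal_l (/ 4) _ _ mass_C_series)
             (is_series_scal_l (/ 4) _ _ (Series_correct _ (corr_summable s)))).
Qed.

Lemma stay_series t : is_series (fun n => pi beta (xC n) * stayC beta t (xC n))
  (2 * Series (zterm beta) * (/ 2) ^ t).
Proof.
  apply is_series_ext with (fun n => (/ 2) ^ t * pi beta (xC n)).
  - intro n. rewrite stayC_geometric, indC_xC. lra.
  - rewrite Rmult_comm. exact (is_series_scal_l ((/ 2) ^ t) _ _ mass_C_series).
Qed.

End Correlation.

(* Choice of the scale K for the upper bound: with l ~ log2 s blocks of length 32 K^2
   we need j ~ log2 K periods, hence K ~ sqrt s / log s. *)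
Lemma log2_le_ln s : (1 <= s)%nat -> INR (Nat.log2 s) <= 2 * ln (INR s).
Proof.
  intro Hs. destruct (Nat.log2_spec s ltac:(lia)) as [Hlg _].
  apply le_INR in Hlg. rewrite pow_INR in Hlg. replace (INR 2) with 2 in Hlg by (simpl; ring).
  assert (Hln : ln (2 ^ Nat.log2 s) <= ln (INR s)) by (apply ln_le; [apply pow_lt; lra | auto]).
  rewrite ln_pow in Hln by lra. pose proof ln_lt_2. pose proof (pos_INR (Nat.log2 s)). nra.
Qed.

Lemma log_small_vs_sqrt z : 10000000000 <= z -> 2 * (24 * ln z + 24) <= sqrt z.
Proof.
  intro Hz. set (w := sqrt (sqrt z)).
  assert (Hw2 : sqrt z = w * w) by (unfold w; rewrite sqrt_sqrt; auto; apply sqrt_pos).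
  assert (Hw4 : z = (w * w) * (w * w)) by (rewrite <- Hw2, sqrt_sqrt; lra).
  assert (Hw : 316 <= w).
  { assert (100000 <= sqrt z) by (rewrite <- (sqrt_square 100000) by lra; apply sqrt_le_1_alt; lra).
    unfold w. rewrite <- (sqrt_square 316) by lra. apply sqrt_le_1_alt. lra. }
  assert (Hln : ln z = 4 * ln w) by (rewrite Hw4, !ln_mult by nra; ring).
  pose proof (ln_le_xm1 w ltac:(lra)). nra.
Qed.

Lemma long_enough_of K l j sq s : (1 <= K)%nat -> (j + 1 <= l)%nat ->
  (12 * l * K <= sq)%nat -> (sq * sq <= s)%nat -> long_enough K j s.
Proof.
  intros HK Hj Hsq Hs. unfold long_enough.
  assert (j * (32 * K * K) + j * (j * (32 * K * K) + 1) = 32 * K * K * (j * (j + 1)) + j)%nat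
    by ring.
  assert (j * (j + 1) <= l * l)%nat by (apply Nat.mul_le_mono; lia).
  assert (l <= K * K * (l * l))%nat.
  { replace l with (1 * 1 * l)%nat at 1 by lia. apply Nat.mul_le_mono; nia. }
  assert ((12 * l * K) * (12 * l * K) <= sq * sq)%nat by nia.
  nia.
Qed.

Lemma time_scale_choice s : 10000000000 <= INR s ->
  exists K j, (1 <= K)%nat /\ (2 * K <= 2 ^ j)%nat /\ long_enough K j s /\
    sqrt (INR s) <= INR K * (48 * ln (INR s) + 48).
Proof.
  intro Hs. assert (HsN : (1 <= s)%nat) by (destruct s; [simpl in Hs; lra | lia]).
  set (sq := Nat.sqrt s). set (l := (Nat.log2 s + 2)%nat). set (D := (12 * l)%nat).
  set (K := (sq / D)%nat).
  destruct (Nat.sqrt_spec s ltac:(lia)) as [Hsq1 _]. fold sq in Hsq1.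
  destruct (nat_sqrt_bounds s) as [_ Hsqrt]. fold sq in Hsqrt.
  assert (HD : INR D <= 24 * ln (INR s) + 24).
  { pose proof (log2_le_ln s HsN). unfold D, l. rewrite mult_INR, plus_INR. simpl. lra. }
  pose proof (log_small_vs_sqrt (INR s) Hs).
  assert (H2D : (2 * D <= sq)%nat).
  { assert (H2D' : INR (2 * D) < INR (sq + 1)) by (rewrite mult_INR, plus_INR; simpl; lra).
    apply INR_lt in H2D'. lia. }
  assert (HD0 : (D <> 0)%nat) by (unfold D; lia).
  pose proof (Nat.div_mod sq D HD0) as Hdm. pose proof (Nat.mod_upper_bound sq D HD0).
  fold K in Hdm.
  assert (HK : (1 <= K)%nat) by nia.
  assert (HDK : (D * K <= sq)%nat) by lia.
  exists K, (S (Nat.log2 (2 * K))). split; [exact HK|]. split; [|split].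
  - destruct (Nat.log2_spec (2 * K) ltac:(lia)) as [_ Hlt]. simpl in Hlt |- *. lia.
  - apply long_enough_of with l sq; [exact HK | | unfold D in HDK; lia | exact Hsq1].
    assert (Nat.log2 (2 * K) <= Nat.log2 s)%nat by (apply Nat.log2_le_mono; nia).
    unfold l. lia.
  - assert (Hsq2DK : (sq + 1 <= 2 * D * K)%nat) by nia.
    apply le_INR in Hsq2DK. rewrite plus_INR, !mult_INR in Hsq2DK. simpl INR in Hsq2DK.
    pose proof (pos_INR K). nra.
Qed.

Lemma corr_upper_eventually beta : 1 < beta < 2 -> exists C, 0 < C /\
  forall s, 10000000000 <= INR s ->
  corr beta s <= C * Rpower (INR s) ((1 - beta) / 2) * Rpower (1 + ln (INR s)) (beta - 1).
Proof.
  intro Hb. set (C0 := 8 + 4 / (beta - 1) + 16 * Series (zterm beta)).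
  assert (HC0 : 0 < C0).
  { pose proof (mass_C_pos beta Hb). assert (0 < 4 / (beta - 1)) by (apply Rdiv_lt_0_compat; lra).
    unfold C0. lra. }
  exists (C0 * Rpower 24 (beta - 1)). split; [pose proof (Rpower_pos 24 (beta - 1)); nra|].
  intros s Hs. destruct (time_scale_choice s Hs) as (K & j & HK & Hj & Hlong & HKs).
  assert (HKR : 1 <= INR K) by (apply (le_INR 1); auto).
  assert (Hln : 0 <= ln (INR s)) by (rewrite <- ln_1; apply ln_le; lra).
  assert (Hsq : 0 < sqrt (INR s)) by (apply sqrt_lt_R0; lra).
  (* 2K >= sqrt s / (24 (1 + ln s)) *)
  set (q := sqrt (INR s) / (24 * (1 + ln (INR s)))).
  assert (Hq : 0 < q) by (apply Rdiv_lt_0_compat; lra).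
  assert (HqK : q <= 2 * INR K) by (apply Rle_div_l; lra).
  assert (Hpow : Rpower q (- (beta - 1)) =
    Rpower 24 (beta - 1) * Rpower (INR s) ((1 - beta) / 2) * Rpower (1 + ln (INR s)) (beta - 1)).
  { unfold q, Rdiv.
    rewrite <- Rpower_mult_distr by (try apply Rinv_0_lt_compat; lra).
    rewrite <- Rpower_sqrt, Rpower_mult, Rpower_inv_base, Ropp_involutive by lra.
    rewrite <- Rpower_mult_distr by lra.
    replace (/ 2 * - (beta - 1)) with ((1 - beta) / 2) by field. unfold Rdiv. ring. }
  apply Rle_trans with (C0 * Rpower (2 * INR K) (- (beta - 1))).
  - apply corr_upper with j; auto.
  - assert (Hmono : Rpower (2 * INR K) (- (beta - 1)) <= Rpower q (- (beta - 1)))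
      by (apply Rpower_le_neg; lra).
    rewrite Hpow in Hmono. nra.
Qed.

Lemma log_dominated A al eps : 0 <= al -> 0 < eps ->
  exists B, 1 <= B /\ forall y, B <= y -> A + al * ln (1 + y) <= eps * y.
Proof.
  intros Hal Heps.
  assert (HA : 0 <= Rabs A * 2 / eps)
    by (apply Rdiv_le_0_compat; [pose proof (Rabs_pos A); lra | lra]).
  assert (Hal2 : 0 <= 32 * al ^ 2 / eps ^ 2) by (apply Rdiv_le_0_compat; nra).
  exists (1 + Rabs A * 2 / eps + 32 * al ^ 2 / eps ^ 2). split; [lra|].
  intros y Hy.
  assert (HAy : A <= eps * y / 2).
  { assert (HyA : Rabs A * 2 / eps <= y) by lra. apply Rle_div_l in HyA; [|lra].
    pose proof (Rle_abs A). lra. }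
  assert (Hsq : al * sqrt (1 + y) <= eps * y / 4).
  { assert (32 * al ^ 2 <= y * eps ^ 2)
      by (assert (Hy2 : 32 * al ^ 2 / eps ^ 2 <= y) by lra; apply Rle_div_l in Hy2; nra).
    pose proof (sqrt_pos (1 + y)). pose proof (sqrt_sqrt (1 + y) ltac:(lra)).
    assert (Hsq2 : (al * sqrt (1 + y)) ^ 2 <= (eps * y / 4) ^ 2) by nra.
    destruct (Rle_lt_dec (al * sqrt (1 + y)) (eps * y / 4)) as [| Hlt]; [auto|].
    assert (0 <= eps * y / 4) by nra.
    assert ((eps * y / 4) * (eps * y / 4) < (al * sqrt (1 + y)) * (al * sqrt (1 + y)))
      by (apply Rmult_le_0_lt_compat; lra).
    simpl in Hsq2. lra. }
  pose proof (ln_le_2sqrt (1 + y) ltac:(lra)).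
  assert (al * ln (1 + y) <= al * (2 * sqrt (1 + y))) by (apply Rmult_le_compat_l; lra).
  lra.
Qed.

Lemma ln_unbounded B : exists N, forall t, (N <= t)%nat -> B <= ln (INR t).
Proof.
  destruct (INR_archimed 1 (exp B) ltac:(lra)) as [N HN]. exists N. intros t Ht.
  apply le_INR in Ht. pose proof (exp_pos B).
  rewrite <- (ln_exp B). apply ln_le; lra.
Qed.

Lemma log_ratio_limit (g : nat -> R) ga al c C N : 0 < c -> 0 < C -> 0 <= al ->
  (forall t, (N <= t)%nat ->
     c * Rpower (INR t) ga <= g t <= C * Rpower (INR t) ga * Rpower (1 + ln (INR t)) al) ->
  Un_cv (fun t => ln (g t) / ln (INR t)) ga.
Proof.
  intros Hc HC Hal Hg eps Heps.
  destruct (log_dominated (ln C) al (eps / 2) Hal ltac:(lra)) as [B1 [HB1 HB1y]].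
  destruct (log_dominated (- ln c) 0 (eps / 2) ltac:(lra) ltac:(lra)) as [B2 [HB2 HB2y]].
  destruct (ln_unbounded (B1 + B2)) as [N1 HN1].
  exists (N + N1 + 1)%nat. intros t Ht.
  set (y := ln (INR t)). assert (Hy : B1 + B2 <= y) by (apply HN1; lia).
  assert (Ht0 : 0 < INR t) by (apply lt_0_INR; lia).
  destruct (Hg t ltac:(lia)) as [Hlo Hup].
  pose proof (Rpower_pos (INR t) ga). pose proof (Rpower_pos (1 + y) al).
  assert (H1y : 0 < 1 + y) by lra.
  assert (Hln_lo : ln c + ga * y <= ln (g t)).
  { apply ln_le in Hlo; [|nra]. rewrite ln_mult, ln_Rpower in Hlo by lra. exact Hlo. }
  assert (Hln_up : ln (g t) <= ln C + ga * y + al * ln (1 + y)).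
  { apply ln_le in Hup; [|nra]. unfold y in *.
    rewrite !ln_mult, !ln_Rpower in Hup by (try apply Rmult_lt_0_compat; lra). lra. }
  specialize (HB1y y ltac:(lra)). specialize (HB2y y ltac:(lra)). rewrite Rmult_0_l in HB2y.
  assert (Hr1 : ga - eps / 2 <= ln (g t) / y) by (apply Rle_div_r; lra).
  assert (Hr2 : ln (g t) / y <= ga + eps / 2) by (apply Rle_div_l; lra).
  unfold Rdist. apply Rabs_lt_between. fold y. lra.
Qed.

Lemma corr_lower_shift beta s : 1 < beta < 2 -> (1 <= s)%nat ->
  / 4 * Rpower 8 (- beta) * Rpower 20 (1 - beta) * Rpower (INR s + 1) ((1 - beta) / 2)
  <= corr beta s.
Proof.
  intros Hb Hs. assert (HsR : 1 <= INR s) by (apply (le_INR 1); auto).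
  pose proof (corr_lower beta Hb s Hs).
  assert (Rpower (INR s + 1) ((1 - beta) / 2) <= Rpower (INR s) ((1 - beta) / 2))
    by (apply Rpower_le_neg; lra).
  assert (0 < / 4 * Rpower 8 (- beta) * Rpower 20 (1 - beta))
    by (pose proof (Rpower_pos 8 (- beta)); pose proof (Rpower_pos 20 (1 - beta)); nra).
  nra.
Qed.

Lemma corr_pos beta s : 1 < beta < 2 -> (1 <= s)%nat -> 0 < corr beta s.
Proof.
  intros Hb Hs. eapply Rlt_le_trans; [|apply corr_lower_shift; auto].
  pose proof (Rpower_pos 8 (- beta)). pose proof (Rpower_pos 20 (1 - beta)).
  pose proof (Rpower_pos (INR s + 1) ((1 - beta) / 2)).
  repeat apply Rmult_lt_0_compat; lra.
Qed.

Lemma corr_upper_shift beta : 1 < beta < 2 -> exists C, 0 < C /\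
  forall s, 10000000000 <= INR s -> corr beta s <=
    C * Rpower (INR s + 1) ((1 - beta) / 2) * Rpower (1 + ln (INR s + 1)) (beta - 1).
Proof.
  intro Hb. destruct (corr_upper_eventually beta Hb) as [C [HC HCup]].
  pose proof (Rpower_pos 2 ((beta - 1) / 2)).
  exists (C * Rpower 2 ((beta - 1) / 2)). split; [nra|].
  intros s Hs. apply Rle_trans with (1 := HCup s Hs).
  set (ga := (1 - beta) / 2).
  (* s >= (s+1)/2 and ln s <= ln (s+1) *)
  assert (Hhalf : Rpower (INR s) ga <= Rpower (INR s + 1) ga * Rpower 2 ((beta - 1) / 2)).
  { replace (Rpower 2 ((beta - 1) / 2)) with (Rpower (/ 2) ga)
      by (rewrite Rpower_inv_base by lra; unfold ga; f_equal; field).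
    rewrite Rpower_mult_distr by lra. apply Rpower_le_neg; unfold ga; lra. }
  assert (Hlog : Rpower (1 + ln (INR s)) (beta - 1) <= Rpower (1 + ln (INR s + 1)) (beta - 1)).
  { assert (0 <= ln (INR s)) by (rewrite <- ln_1; apply ln_le; lra).
    assert (ln (INR s) <= ln (INR s + 1)) by (apply ln_le; lra).
    apply Rle_Rpower_l; lra. }
  pose proof (Rpower_pos (INR s) ga). pose proof (Rpower_pos (1 + ln (INR s)) (beta - 1)).
  apply Rle_trans with (C * (Rpower (INR s + 1) ga * Rpower 2 ((beta - 1) / 2))
                        * Rpower (1 + ln (INR s + 1)) (beta - 1)).
  - apply Rmult_le_compat; try nra.
  - right. ring.
Qed.

Lemma excess_bounds beta : 1 < beta < 2 -> exists c C N, 0 < c /\ 0 < C /\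
  forall t, (N <= t)%nat ->
    c * Rpower (INR t) ((1 - beta) / 2)
    <= corr beta (pred t) / (4 * (2 * Series (zterm beta)))
    <= C * Rpower (INR t) ((1 - beta) / 2) * Rpower (1 + ln (INR t)) (beta - 1).
Proof.
  intro Hb. pose proof (mass_C_pos beta Hb).
  set (PC4 := 4 * (2 * Series (zterm beta))). assert (HPC4 : 0 < PC4) by (unfold PC4; lra).
  set (cL := / 4 * Rpower 8 (- beta) * Rpower 20 (1 - beta)).
  assert (HcL : 0 < cL) by (unfold cL; pose proof (Rpower_pos 8 (- beta));
                            pose proof (Rpower_pos 20 (1 - beta)); nra).
  destruct (corr_upper_shift beta Hb) as [C [HC HCup]].
  destruct (INR_archimed 1 10000000000 ltac:(lra)) as [N0 HN0].
  exists (cL / PC4), (C / PC4), (N0 + 2)%nat.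
  split; [apply Rdiv_lt_0_compat; lra|]. split; [apply Rdiv_lt_0_compat; lra|].
  intros t Ht. destruct t as [|s]; [lia|]. simpl pred. rewrite S_INR.
  assert (Hs : 10000000000 <= INR s) by (assert (INR N0 <= INR s) by (apply le_INR; lia); lra).
  pose proof (corr_lower_shift beta s Hb ltac:(apply INR_le; simpl; lra)) as Hlo.
  pose proof (HCup s Hs) as Hhi. fold cL in Hlo.
  unfold Rdiv. split.
  - replace (cL * / PC4 * Rpower (INR s + 1) ((1 - beta) * / 2))
      with (cL * Rpower (INR s + 1) ((1 - beta) * / 2) * / PC4) by ring.
    apply Rmult_le_compat_r; [left; apply Rinv_0_lt_compat|]; lra.
  - replace (C * / PC4 * Rpower (INR s + 1) ((1 - beta) * / 2)
             * Rpower (1 + ln (INR s + 1)) (beta - 1))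
      with (C * Rpower (INR s + 1) ((1 - beta) * / 2)
             * Rpower (1 + ln (INR s + 1)) (beta - 1) * / PC4) by ring.
    apply Rmult_le_compat_r; [left; apply Rinv_0_lt_compat|]; lra.
Qed.

Theorem mainTheorem8 (beta : R) (hbeta : 1 < beta < 2) :
  exists (Ztot PC : R) (J Sv : nat -> R),
    sumZstar (pi beta) Ztot /\
    sumC (pi beta) PC /\
    (forall t : nat, sumC (fun x => pi beta x * hitC beta t x) (J t)) /\
    (forall t : nat, sumC (fun x => pi beta x * stayC beta t x) (Sv t)) /\
    PC / Ztot = 1 / 4 /\
    (exists T : nat, forall t : nat, (T <= t)%nat -> J t / PC > 1 / 4) /\
    Un_cv (fun t : nat => ln (J t / PC - 1 / 4) / ln (INR t)) ((1 - beta) / 2) /\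
    (exists c K : R, 0 < c /\
       forall t : nat, Sv t / Ztot <= K * exp (- c * INR t)).
Proof.
  pose proof (mass_C_pos beta hbeta) as HPC.
  set (Z := Series (zterm beta)) in *.
  set (J := fun t => match t with O => 2 * Z | S s => / 4 * (2 * Z) + / 4 * corr beta s end).
  assert (HJ : forall t, (1 <= t)%nat ->
    J t / (2 * Z) - 1 / 4 = corr beta (pred t) / (4 * (2 * Z))).
  { intros [|s] Ht; [lia|]. unfold J. simpl. field. lra. }
  destruct (stationary_masses beta ltac:(lra)) as [HZ HC].
  exists (8 * Z), (2 * Z), J, (fun t => 2 * Z * (/ 2) ^ t).
  split; [exact HZ|]. split; [exact HC|].
  split; [intros [|s]; apply is_series_Reals;
          [exact (hit_series_0 beta hbeta) | exact (hit_series_S beta hbeta s)]|].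
  split; [intro t; apply is_series_Reals, stay_series; lra|].
  split; [field; lra|].
  split.
  { exists 2%nat. intros t Ht.
    pose proof (corr_pos beta (pred t) hbeta ltac:(lia)).
    pose proof (HJ t ltac:(lia)).
    assert (0 < corr beta (pred t) / (4 * (2 * Z))) by (apply Rdiv_lt_0_compat; lra). lra. }
  split.
  { destruct (excess_bounds beta hbeta) as (c & C & N & Hc & HC' & Hb).
    apply (log_ratio_limit _ _ (beta - 1) c C (N + 1)); [auto | auto | lra|].
    intros t Ht. rewrite HJ by lia. apply Hb. lia. }
  exists (ln 2), (/ 4). split; [pose proof ln_lt_2; lra|].
  intro t. right. rewrite <- (Rpower_pow t (/ 2)) by lra. unfold Rpower.
  rewrite ln_Rinv by lra. replace (INR t * - ln 2) with (- ln 2 * INR t) by ring. field. lra.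
Qed.
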